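(* Let $\mu_n>0$ satisfy $\mu_n\to 0$ and $n^{1/2}\mu_n\to\mathfrak m$ with $0\le\mathfrak m\le\infty$. Let $\theta_n\in\mathbb R$ be a sequence of true parameters. (i) Suppose $0\le\mathfrak m<\infty$ and $n^{1/2}\theta_n\to\nu\in\mathbb R\cup\{-\infty,\infty\}$. Then $$\lim_{n\to\infty}P_{n,\theta_n}(\hat\theta_A=0)=\Phi(-\nu+\mathfrak m)-\Phi(-\nu-\mathfrak m).$$ (ii) Suppose $\mathfrak m=\infty$ and $\theta_n/\mu_n\to\zeta\in\mathbb R\cup\{-\infty,\infty\}$. Then: 1. if $|\zeta|<1$, then $\lim_{n}P_{n,\theta_n}(\hat\theta_A=0)=1$; 2. if $|\zeta|=1$ and $n^{1/2}(\mu_n-\zeta\theta_n)\to r\in\mathbb R\cup\{-\infty,\infty\}$, then $\lim_nP_{n,\theta_n}(\hat\theta_A=0)=\Phi(r)$; 3. if $|\zeta|>1$, then $\lim_nP_{n,\theta_n}(\hat\theta_A=0)=0$.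
   Context: Gaussian location model: for each sample size $n$, $y_1,\dots,y_n$ are i.i.d. $N(\theta,1)$ with $\theta\in\mathbb R$ unknown; $\bar y$ is their mean. $P_{n,\theta}$ denotes the probability governing a sample of size $n$ when $\theta$ is the true parameter. Given a nonrandom tuning parameter $\mu_n>0$, the adaptive LASSO estimator is $$\hat\theta_A=\bar y(1-\mu_n^2/\bar y^2)_+=\begin{cases}0,&|\bar y|\le\mu_n,\\ \bar y-\mu_n^2/\bar y,&|\bar y|>\mu_n.\end{cases}$$ $\Phi$ denotes the standard normal cdf, with $\Phi(\infty)=1$, $\Phi(-\infty)=0$. *)

From Stdlib Require Import Reals Lra.
Open Scope R_scope.

Definition phi (x : R) : R := exp (- x ^ 2 / 2) / sqrt (2 * PI).

Definition improper_int_left (f : R -> R) (x l : R) : Prop :=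
  forall eps, 0 < eps -> exists A, forall a, a < A ->
    exists pr : Riemann_integrable f a x, Rabs (RiemannInt pr - l) < eps.

Definition improper_int_R (f : R -> R) (l : R) : Prop :=
  forall eps, 0 < eps -> exists A, forall a b, a < - A -> A < b ->
    exists pr : Riemann_integrable f a b, Rabs (RiemannInt pr - l) < eps.

Definition is_std_normal_cdf (Phi : R -> R) : Prop :=
  forall x, improper_int_left phi x (Phi x).

Definition alasso (mu ybar : R) : R :=
  ybar * Rmax 0 (1 - mu ^ 2 / ybar ^ 2).

(* Density of ybar ~ N(theta, 1/n) under P_{n,theta}. *)
Definition ybar_density (n : nat) (theta y : R) : R :=
  sqrt (INR n) * phi (sqrt (INR n) * (y - theta)).

Definition indic (P : Prop) (d : {P} + {~ P}) : R := if d then 1 else 0.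

Definition prob_alasso_zero (n : nat) (mu theta p : R) : Prop :=
  improper_int_R
    (fun y => ybar_density n theta y * indic _ (Req_EM_T (alasso mu y) 0)) p.

Inductive ER : Type := Fin (x : R) | PInf | MInf.

Definition cv_ER (u : nat -> R) (l : ER) : Prop :=
  match l with
  | Fin x => Un_cv u x
  | PInf => cv_infty u
  | MInf => cv_infty (fun n => - u n)
  end.

Definition ER_neg_plus (e : ER) (c : R) : ER :=
  match e with
  | Fin x => Fin (- x + c)
  | PInf => MInf
  | MInf => PInf
  end.

Definition PhiE (Phi : R -> R) (e : ER) : R :=
  match e with
  | Fin x => Phi x
  | PInf => 1
  | MInf => 0
  end.

Definition ER_abs_lt1 (e : ER) : Prop :=
  match e with Fin x => Rabs x < 1 | _ => False end.

Definition ER_abs_gt1 (e : ER) : Prop :=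
  match e with Fin x => 1 < Rabs x | _ => True end.

(* Since theta_A = 0 exactly when |ybar| <= mu_n, and ybar ~ N(theta_n, 1/n),
   P(theta_A = 0) = Phi(sqrt n (mu_n - theta_n)) - Phi(sqrt n (- mu_n - theta_n)).
   Every case of the proposition is then a computation of the limits, in the
   extended reals, of the two standardized band edges sqrt n (c mu_n - theta_n),
   c = 1 or -1; in regime (ii) they equal sqrt n mu_n (c - theta_n / mu_n).
   One needs that Phi is continuous with Phi(-oo) = 0, Phi(+oo) = 1 and
   Phi(x) + Phi(-x) = 1.  Phi(+oo) = 1 is the Gaussian integral
   int_0^oo exp(-t^2/2) dt = sqrt(pi/2): with G = gauss_int, H = gauss_aux,
   G(x) = int_0^x exp(-t^2/2) dt and
   H(x) = int_0^1 exp(-x^2 (1+t^2)/2) / (1+t^2) dt, differentiation under the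
   integral sign and the substitution s = x t give H' = - G' G, so G^2 + 2 H is
   constant, equal to 2 H(0) = pi/2, while H(x) -> 0 as x -> +oo. *)
From Stdlib Require Import Reals Lra.
From Coquelicot Require Import Coquelicot.
Open Scope R_scope.

Lemma ex_RInt_of_continuous (f : R -> R) a b :
  (forall x, continuous f x) -> ex_RInt f a b.
Proof.
intros Hf; apply (ex_RInt_continuous (V:=R_CompleteNormedModule)); intros; apply Hf.
Qed.

Lemma is_lim_const_unique (f : R -> R) x (c d : R) :
  is_lim f x c -> (forall y, f y = d) -> c = d.
Proof.
intros Hf Hd.
assert (Hd' : is_lim f x d) by (apply (is_lim_ext (fun _ => d)); auto; apply is_lim_const).
apply is_lim_unique in Hf; apply is_lim_unique in Hd'.
rewrite Hf in Hd'; now injection Hd'.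
Qed.

Lemma is_lim_opp_p_infty (f : R -> R) l :
  is_lim f m_infty l -> is_lim (fun y => f (- y)) p_infty l.
Proof.
intros Hf; apply (is_lim_comp f (fun y => - y) p_infty l m_infty); [exact Hf| |].
- apply (is_lim_opp (fun y => y) p_infty p_infty), is_lim_id.
- exists 0; intros; discriminate.
Qed.

Definition gauss (t : R) : R := exp (- t ^ 2 / 2).
Definition gauss_int (x : R) : R := RInt gauss 0 x.

Definition gauss_kernel (x t : R) : R :=
  exp (- (x ^ 2 * (1 + t ^ 2)) / 2) / (1 + t ^ 2).
Definition gauss_aux (x : R) : R := RInt (gauss_kernel x) 0 1.

Lemma one_plus_sqr_pos t : 0 < 1 + t ^ 2.
Proof. nra. Qed.

Lemma gauss_pos x : 0 < gauss x.
Proof. apply exp_pos. Qed.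

Lemma gauss_opp x : gauss (- x) = gauss x.
Proof. unfold gauss; do 3 f_equal; ring. Qed.

Lemma continuous_gauss x : continuous gauss x.
Proof.
apply (ex_derive_continuous (K:=R_AbsRing) (V:=R_NormedModule)).
unfold gauss; auto_derive; easy.
Qed.

Lemma continuous_gauss_kernel x t : continuous (gauss_kernel x) t.
Proof.
apply (ex_derive_continuous (K:=R_AbsRing) (V:=R_NormedModule)).
unfold gauss_kernel; auto_derive; generalize (one_plus_sqr_pos t); lra.
Qed.

Lemma is_derive_gauss_kernel x t :
  is_derive (fun u => gauss_kernel u t) x (- x * exp (- (x ^ 2 * (1 + t ^ 2)) / 2)).
Proof.
unfold gauss_kernel; auto_derive; [easy|].
generalize (one_plus_sqr_pos t); intro.
replace (x * (x * 1) * (1 + t * (t * 1))) with (x ^ 2 * (1 + t ^ 2)) by ring.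
unfold Rdiv; field; lra.
Qed.

Lemma continuity_2d_gauss_kernel_derive x t :
  continuity_2d_pt (fun u v => - u * exp (- (u ^ 2 * (1 + v ^ 2)) / 2)) x t.
Proof.
apply continuity_2d_pt_mult.
{ apply continuity_2d_pt_opp, continuity_2d_pt_id1. }
apply continuity_1d_2d_pt_comp; [apply derivable_continuous_pt, derivable_exp|].
apply continuity_2d_pt_ext with (fun u v => - (u * u * (1 + v * v)) * / 2).
{ intros; simpl; field. }
repeat first [ apply continuity_2d_pt_mult | apply continuity_2d_pt_opp
             | apply continuity_2d_pt_plus | apply continuity_2d_pt_const
             | apply continuity_2d_pt_id1 | apply continuity_2d_pt_id2 ].
Qed.

Lemma is_derive_gauss_int x : is_derive gauss_int x (gauss x).
Proof.
apply is_derive_RInt with 0; [|apply continuous_gauss].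
apply filter_forall; intros b.
apply (RInt_correct (V:=R_CompleteNormedModule)), ex_RInt_of_continuous, continuous_gauss.
Qed.

Lemma RInt_gauss_kernel_derive x :
  RInt (fun t => - x * exp (- (x ^ 2 * (1 + t ^ 2)) / 2)) 0 1 = - gauss x * gauss_int x.
Proof.
rewrite (RInt_ext _ (fun t => scal (- gauss x) (scal x (gauss (x * t + 0))))).
- rewrite (RInt_scal (V:=R_CompleteNormedModule)), (RInt_comp_lin (V:=R_CompleteNormedModule)).
  + unfold gauss_int, scal; simpl; unfold mult; simpl.
    now rewrite Rmult_0_r, Rplus_0_r, Rmult_1_r, Rplus_0_r.
  + apply ex_RInt_of_continuous, continuous_gauss.
  + apply ex_RInt_of_continuous; intros t.
    apply (ex_derive_continuous (K:=R_AbsRing) (V:=R_NormedModule)).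
    unfold gauss, scal; simpl; unfold mult; simpl; auto_derive; easy.
- intros t _; unfold gauss, scal; simpl; unfold mult; simpl.
  replace (- (x * (x * 1) * (1 + t * (t * 1))) / 2)
    with (- (x * (x * 1)) / 2 + - ((x * t + 0) * ((x * t + 0) * 1)) / 2) by field.
  rewrite exp_plus; ring.
Qed.

Lemma is_derive_gauss_aux x : is_derive gauss_aux x (- gauss x * gauss_int x).
Proof.
rewrite <- RInt_gauss_kernel_derive.
replace (RInt _ 0 1) with (RInt (fun t => Derive (fun u => gauss_kernel u t) x) 0 1).
- apply is_derive_RInt_param.
  + apply filter_forall; intros y t _; eexists; apply is_derive_gauss_kernel.
  + intros t _.
    apply continuity_2d_pt_ext with (2 := continuity_2d_gauss_kernel_derive x t).
    intros; symmetry; apply is_derive_unique, is_derive_gauss_kernel.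
  + apply filter_forall; intros y.
    apply ex_RInt_of_continuous, continuous_gauss_kernel.
- apply RInt_ext; intros t _; apply is_derive_unique, is_derive_gauss_kernel.
Qed.

Lemma gauss_aux0 : gauss_aux 0 = PI / 4.
Proof.
unfold gauss_aux.
rewrite (RInt_ext _ (fun t => / (1 + t ^ 2))).
- replace (PI / 4) with (atan 1 - atan 0) by (rewrite atan_1, atan_0; ring).
  apply is_RInt_unique, (is_RInt_derive (V:=R_CompleteNormedModule) atan).
  + intros x _; replace (x ^ 2) with (Rsqr x) by (unfold Rsqr; ring).
    apply is_derive_atan.
  + intros x _; apply (ex_derive_continuous (K:=R_AbsRing) (V:=R_NormedModule)).
    auto_derive; generalize (one_plus_sqr_pos x); lra.
- intros t _; unfold gauss_kernel.
  replace (- (0 ^ 2 * (1 + t ^ 2)) / 2) with 0 by field.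
  now rewrite exp_0; unfold Rdiv; rewrite Rmult_1_l.
Qed.

Lemma gauss_int_sqr_plus_aux x : gauss_int x * gauss_int x + 2 * gauss_aux x = PI / 2.
Proof.
set (F := fun y => gauss_int y * gauss_int y + 2 * gauss_aux y).
assert (HF : forall y, is_derive F y 0).
{ intros y.
  replace 0 with (gauss y * gauss_int y + gauss_int y * gauss y
                  + 2 * (- gauss y * gauss_int y)) by ring.
  apply (is_derive_plus (K:=R_AbsRing) (V:=R_NormedModule)).
  - apply (is_derive_mult (K:=R_AbsRing)); try apply is_derive_gauss_int.
    exact Rmult_comm.
  - apply (is_derive_scal gauss_aux), is_derive_gauss_aux. }
assert (E : is_RInt (fun _ => 0) 0 x (minus (F x) (F 0))).
{ apply (is_RInt_derive (V:=R_CompleteNormedModule) F); [intros; apply HF|].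
  intros; apply continuous_const. }
apply (is_RInt_unique (V:=R_CompleteNormedModule)) in E.
rewrite (RInt_const (V:=R_CompleteNormedModule)) in E.
unfold F, minus, plus, opp, scal in E; simpl in E; unfold mult in E; simpl in E.
rewrite gauss_aux0 in E; unfold gauss_int in E; rewrite (RInt_point (V:=R_CompleteNormedModule)) in E.
fold (gauss_int x) in E; unfold zero in E; simpl in E; lra.
Qed.

Lemma gauss_aux_bounds x : 0 <= gauss_aux x <= gauss x.
Proof.
assert (Hk : forall t, 0 <= t <= 1 -> 0 <= gauss_kernel x t <= gauss x).
{ intros t _; unfold gauss_kernel, gauss.
  pose proof (one_plus_sqr_pos t).
  set (e := exp (- (x ^ 2 * (1 + t ^ 2)) / 2)).
  assert (He : 0 < e) by apply exp_pos.
  assert (Hq : 0 <= e / (1 + t ^ 2) <= e).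
  { split; [apply Rlt_le, Rdiv_lt_0_compat; lra|].
    apply Rmult_le_reg_r with (1 + t ^ 2); [lra|].
    unfold Rdiv; rewrite Rmult_assoc, Rinv_l by lra; nra. }
  split; [lra|].
  apply Rle_trans with e; [lra|].
  assert (Harg : - (x ^ 2 * (1 + t ^ 2)) / 2 <= - x ^ 2 / 2) by nra.
  destruct (Rle_lt_or_eq_dec _ _ Harg) as [Hlt|Heq].
  - apply Rlt_le, exp_increasing, Hlt.
  - unfold e; rewrite Heq; lra. }
assert (Hint : ex_RInt (gauss_kernel x) 0 1)
  by apply ex_RInt_of_continuous, continuous_gauss_kernel.
split.
- apply RInt_ge_0; [lra|exact Hint|]; intros t Ht; apply Hk; lra.
- replace (gauss x) with (RInt (fun _ => gauss x) 0 1).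
  + apply RInt_le; [lra|exact Hint| |].
    * apply ex_RInt_of_continuous; intros; apply continuous_const.
    * intros t Ht; apply Hk; lra.
  + rewrite (RInt_const (V:=R_CompleteNormedModule)).
    unfold scal; simpl; unfold mult; simpl; ring.
Qed.

Lemma is_lim_gauss_p_infty : is_lim gauss p_infty 0.
Proof.
apply (is_lim_comp exp (fun y => - y ^ 2 / 2) p_infty 0 m_infty).
- apply is_lim_exp_m.
- apply (is_lim_le_m_loc (fun y => - (1 / 2) * y)).
  + exists 1; intros y Hy; nra.
  + replace m_infty with (Rbar_mult (- (1 / 2)) p_infty).
    * apply is_lim_scal_l, is_lim_id.
    * simpl; case (Rle_dec 0 (- (1 / 2))); intros h; [exfalso; lra|easy].
- exists 0; intros; discriminate.
Qed.

Lemma is_lim_gauss_m_infty : is_lim gauss m_infty 0.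
Proof.
apply (is_lim_ext (fun y => gauss (- y))); [intros; apply gauss_opp|].
apply (is_lim_comp gauss (fun y => - y) m_infty 0 p_infty).
- apply is_lim_gauss_p_infty.
- apply (is_lim_opp (fun y => y) m_infty m_infty), is_lim_id.
- exists 0; intros; discriminate.
Qed.

Lemma is_lim_gauss_aux : is_lim gauss_aux p_infty 0.
Proof.
apply (is_lim_le_le_loc (fun _ => 0) gauss).
- exists 0; intros; apply gauss_aux_bounds.
- apply is_lim_const.
- apply is_lim_gauss_p_infty.
Qed.

Lemma gauss_int_ge0 x : 0 <= x -> 0 <= gauss_int x.
Proof.
intros Hx; apply RInt_ge_0; [easy| |].
- apply ex_RInt_of_continuous, continuous_gauss.
- intros; apply Rlt_le, gauss_pos.
Qed.

Lemma is_lim_gauss_int : is_lim gauss_int p_infty (sqrt (PI / 2)).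
Proof.
apply (is_lim_ext_loc (fun x => sqrt (PI / 2 - 2 * gauss_aux x))).
{ exists 0; intros x Hx; rewrite <- (gauss_int_sqr_plus_aux x).
  replace (_ + _ - _) with (gauss_int x * gauss_int x) by ring.
  apply sqrt_square, gauss_int_ge0; lra. }
apply (is_lim_comp_continuous (fun x => PI / 2 - 2 * gauss_aux x) sqrt p_infty (PI / 2)).
- assert (L : is_lim (fun x => PI / 2 - 2 * gauss_aux x) p_infty (PI / 2 - 2 * 0)).
  { apply is_lim_minus'; [apply is_lim_const|].
    apply (is_lim_scal_l gauss_aux 2 p_infty 0), is_lim_gauss_aux. }
  now rewrite Rmult_0_r, Rminus_0_r in L.
- apply continuity_pt_filterlim, continuity_pt_sqrt; generalize PI_RGT_0; lra.
Qed.

Lemma phi_gauss x : phi x = gauss x / sqrt (2 * PI).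
Proof. reflexivity. Qed.

Lemma sqrt_2PI_pos : 0 < sqrt (2 * PI).
Proof. apply sqrt_lt_R0; generalize PI_RGT_0; lra. Qed.

Lemma sqrt_2PI_eq : sqrt (2 * PI) = 2 * sqrt (PI / 2).
Proof.
replace (2 * PI) with ((2 * 2) * (PI / 2)) by field.
rewrite sqrt_mult, sqrt_square; [easy|lra|lra|generalize PI_RGT_0; lra].
Qed.

Lemma phi_pos x : 0 < phi x.
Proof. apply Rdiv_lt_0_compat; [apply gauss_pos|apply sqrt_2PI_pos]. Qed.

Lemma phi_opp x : phi (- x) = phi x.
Proof. rewrite !phi_gauss, gauss_opp; reflexivity. Qed.

Lemma continuous_phi x : continuous phi x.
Proof.
apply (ex_derive_continuous (K:=R_AbsRing) (V:=R_NormedModule)).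
unfold phi; auto_derive; generalize sqrt_2PI_pos; lra.
Qed.

Lemma ex_RInt_phi a b : ex_RInt phi a b.
Proof. apply ex_RInt_of_continuous, continuous_phi. Qed.

Lemma RInt_phi_opp a b : RInt phi a b = RInt phi (- b) (- a).
Proof.
assert (D := is_RInt_comp_opp phi a b _
  (RInt_correct (V:=R_CompleteNormedModule) _ _ _ (ex_RInt_phi (- a) (- b)))).
apply (is_RInt_unique (V:=R_CompleteNormedModule)) in D.
rewrite (RInt_ext _ (fun y => - phi y)) in D
  by (intros; unfold opp; simpl; rewrite phi_opp; ring).
rewrite (RInt_opp (V:=R_CompleteNormedModule)) in D by apply ex_RInt_phi.
rewrite <- (opp_RInt_swap (V:=R_CompleteNormedModule) phi (- a) (- b)) by apply ex_RInt_phi.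
unfold opp in D |- *; simpl in D |- *; lra.
Qed.

(* On [t <= -1], [phi t <= - t phi t], which is the derivative of [gauss t / sqrt (2 PI)]. *)
Lemma RInt_phi_le_gauss c x : c <= x <= -1 -> RInt phi c x <= gauss x / sqrt (2 * PI).
Proof.
intros Hcx; pose proof sqrt_2PI_pos.
assert (Hd : forall t, is_derive (fun t => gauss t / sqrt (2 * PI)) t (- t * phi t)).
{ intros t; unfold gauss, phi; auto_derive; [easy|].
  match goal with |- ?a = ?b => change (@eq R a b) end.
  replace (- (t * (t * 1)) * / 2) with (- t ^ 2 / 2) by (unfold Rdiv; ring).
  field; lra. }
assert (E : is_RInt (fun t => - t * phi t) c x
              (minus (gauss x / sqrt (2 * PI)) (gauss c / sqrt (2 * PI)))).
{ apply (is_RInt_derive (V:=R_CompleteNormedModule) (fun t => gauss t / sqrt (2 * PI)));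
    [intros; apply Hd|].
  intros t _; apply (ex_derive_continuous (K:=R_AbsRing) (V:=R_NormedModule)).
  unfold phi; auto_derive; lra. }
apply Rle_trans with (minus (gauss x / sqrt (2 * PI)) (gauss c / sqrt (2 * PI))).
- rewrite <- (is_RInt_unique _ _ _ _ E).
  apply RInt_le; [lra|apply ex_RInt_phi|eexists; exact E|].
  intros t Ht; pose proof (phi_pos t); nra.
- unfold minus, plus, opp; simpl.
  assert (0 < gauss c / sqrt (2 * PI)) by (apply Rdiv_lt_0_compat; [apply gauss_pos|lra]).
  lra.
Qed.

Section NormalCdf.

Variable Phi : R -> R.
Hypothesis HPhi : is_std_normal_cdf Phi.

Lemma is_lim_RInt_phi x : is_lim (fun c => RInt phi c x) m_infty (Phi x).
Proof.
unfold is_lim; simpl; apply filterlim_locally; intros eps.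
destruct (HPhi x eps (cond_pos eps)) as [A HA].
exists A; intros c Hc; destruct (HA c Hc) as [pr Hpr].
rewrite <- RInt_Reals in Hpr; exact Hpr.
Qed.

Lemma Phi_sub a b : Phi b - Phi a = RInt phi a b.
Proof.
apply (is_lim_const_unique (fun c => RInt phi c b - RInt phi c a) m_infty).
- apply is_lim_minus'; apply is_lim_RInt_phi.
- intros c; rewrite <- (RInt_Chasles (V:=R_CompleteNormedModule) phi c a b)
    by apply ex_RInt_phi.
  unfold plus; simpl; ring.
Qed.

Lemma continuous_Phi x : continuous Phi x.
Proof.
apply (continuous_ext (fun y => plus (RInt phi 0 y) (Phi 0))).
{ intros y; rewrite <- Phi_sub; unfold plus; simpl; ring. }
apply (continuous_plus (K:=R_AbsRing) (V:=R_NormedModule)); [|apply continuous_const].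
apply (ex_derive_continuous (K:=R_AbsRing) (V:=R_NormedModule)).
eexists; apply (is_derive_RInt (V:=R_NormedModule) phi _ 0).
- apply filter_forall; intros y.
  apply (RInt_correct (V:=R_CompleteNormedModule)), ex_RInt_phi.
- apply continuous_phi.
Qed.

Lemma Phi_tail_bounds x : x <= -1 -> 0 <= Phi x <= gauss x / sqrt (2 * PI).
Proof.
intros Hx; split.
- assert (Le := filterlim_le (F:=Rbar_locally' m_infty) (fun _ => 0)
                   (fun c => RInt phi c x) 0 (Phi x)).
  simpl in Le; apply Le; [|apply is_lim_const|apply is_lim_RInt_phi].
  exists x; intros c Hc; apply RInt_ge_0; [lra|apply ex_RInt_phi|].
  intros t _; apply Rlt_le, phi_pos.
- assert (Le := filterlim_le (F:=Rbar_locally' m_infty) (fun c => RInt phi c x)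
                   (fun _ => gauss x / sqrt (2 * PI)) (Phi x) (gauss x / sqrt (2 * PI))).
  simpl in Le; apply Le; [|apply is_lim_RInt_phi|apply is_lim_const].
  exists x; intros c Hc; apply RInt_phi_le_gauss; lra.
Qed.

Lemma is_lim_Phi_m_infty : is_lim Phi m_infty 0.
Proof.
apply (is_lim_le_le_loc (fun _ => 0) (fun x => / sqrt (2 * PI) * gauss x)).
- exists (-1); intros y Hy; rewrite Rmult_comm; apply Phi_tail_bounds; lra.
- apply is_lim_const.
- replace (Finite 0) with (Rbar_mult (/ sqrt (2 * PI)) 0) by (simpl; f_equal; ring).
  apply is_lim_scal_l, is_lim_gauss_m_infty.
Qed.

Lemma Phi_eq_opp_plus y : Phi y = Phi (- y) + (2 / sqrt (2 * PI)) * gauss_int y.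
Proof.
assert (A := Phi_sub (- y) y).
rewrite <- (RInt_Chasles (V:=R_CompleteNormedModule) phi (- y) 0 y) in A
  by apply ex_RInt_phi.
rewrite (RInt_phi_opp (- y) 0), Ropp_0, Ropp_involutive in A.
assert (B : RInt phi 0 y = / sqrt (2 * PI) * gauss_int y).
{ unfold gauss_int; rewrite <- (RInt_scal (V:=R_CompleteNormedModule))
    by apply ex_RInt_of_continuous, continuous_gauss.
  apply RInt_ext; intros; rewrite phi_gauss.
  unfold scal; simpl; unfold mult; simpl; unfold Rdiv; ring. }
unfold plus in A; simpl in A; rewrite B in A; unfold Rdiv; lra.
Qed.

Lemma is_lim_Phi_p_infty : is_lim Phi p_infty 1.
Proof.
apply (is_lim_ext (fun y => Phi (- y) + (2 / sqrt (2 * PI)) * gauss_int y)).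
{ intros; symmetry; apply Phi_eq_opp_plus. }
replace (Finite 1) with (Finite (0 + (2 / sqrt (2 * PI)) * sqrt (PI / 2))).
- apply is_lim_plus'; [apply is_lim_opp_p_infty, is_lim_Phi_m_infty|].
  apply (is_lim_scal_l gauss_int _ p_infty (sqrt (PI / 2))), is_lim_gauss_int.
- f_equal; rewrite sqrt_2PI_eq; field.
  apply Rgt_not_eq, sqrt_lt_R0; generalize PI_RGT_0; lra.
Qed.

Lemma Phi_add_opp x : Phi x + Phi (- x) = 1.
Proof.
symmetry; apply (is_lim_const_unique (fun y => Phi y + Phi (- y)) p_infty).
- replace 1 with (1 + 0) by ring.
  apply is_lim_plus'; [apply is_lim_Phi_p_infty|].
  apply is_lim_opp_p_infty, is_lim_Phi_m_infty.
- intros y; pose proof (Phi_sub x y); pose proof (Phi_sub (- y) (- x)).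
  rewrite <- RInt_phi_opp in *; lra.
Qed.

Definition Phi_bar (l : Rbar) : R :=
  match l with Finite x => Phi x | p_infty => 1 | m_infty => 0 end.

Lemma is_lim_seq_Phi u l :
  is_lim_seq u l -> is_lim_seq (fun n => Phi (u n)) (Phi_bar l).
Proof.
intros Hu; destruct l as [r| |]; simpl.
- apply (filterlim_comp _ _ _ u Phi eventually (locally r) (locally (Phi r))).
  + exact Hu.
  + apply continuous_Phi.
- apply (is_lim_comp_seq Phi u p_infty 1); [apply is_lim_Phi_p_infty| |exact Hu].
  exists 0%nat; intros; discriminate.
- apply (is_lim_comp_seq Phi u m_infty 0); [apply is_lim_Phi_m_infty| |exact Hu].
  exists 0%nat; intros; discriminate.
Qed.

End NormalCdf.

Definition Rbar_of_ER (e : ER) : Rbar :=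
  match e with Fin x => Finite x | PInf => p_infty | MInf => m_infty end.

Lemma cv_ER_is_lim_seq u e : cv_ER u e -> is_lim_seq u (Rbar_of_ER e).
Proof.
destruct e as [x| |]; simpl; intros Hu.
- now apply is_lim_seq_Reals.
- now apply is_lim_seq_p_infty_Reals.
- apply is_lim_seq_p_infty_Reals, (proj1 (is_lim_seq_opp _ _)) in Hu.
  exact (is_lim_seq_ext _ _ _ (fun n => Ropp_involutive (u n)) Hu).
Qed.

Lemma PhiE_Phi_bar Phi e : PhiE Phi e = Phi_bar Phi (Rbar_of_ER e).
Proof. now destruct e. Qed.

Lemma Rbar_of_ER_neg_plus e c :
  Rbar_of_ER (ER_neg_plus e c) = Rbar_plus (Rbar_opp (Rbar_of_ER e)) c.
Proof. now destruct e. Qed.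

Lemma alasso_eq0 mu y : Rabs y < mu -> alasso mu y = 0.
Proof.
intros Hy; unfold alasso; destruct (Req_dec y 0) as [->|Hy0]; [ring|].
assert (Y : 0 < y ^ 2) by (rewrite <- pow2_abs; apply pow_lt, Rabs_pos_lt, Hy0).
assert (Y2 : y ^ 2 < mu ^ 2)
  by (rewrite <- (pow2_abs y); pose proof (Rabs_pos y); nra).
assert (mu ^ 2 / y ^ 2 * y ^ 2 = mu ^ 2) by (field; lra).
rewrite Rmax_left; [ring|nra].
Qed.

Lemma alasso_neq0 mu y : 0 <= mu -> mu < Rabs y -> alasso mu y <> 0.
Proof.
intros Hmu Hy; unfold alasso.
assert (Hy0 : y <> 0) by (intros ->; rewrite Rabs_R0 in Hy; lra).
assert (Y : 0 < y ^ 2) by (rewrite <- pow2_abs; apply pow_lt, Rabs_pos_lt, Hy0).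
assert (Y2 : mu ^ 2 < y ^ 2) by (rewrite <- (pow2_abs y); nra).
assert (mu ^ 2 / y ^ 2 * y ^ 2 = mu ^ 2) by (field; lra).
rewrite Rmax_right by nra.
apply Rmult_integral_contrapositive; split; [exact Hy0|nra].
Qed.

Lemma improper_int_R_unique f l l' :
  improper_int_R f l ->
  (exists B, forall a b, a < - B -> B < b -> is_RInt f a b l') -> l = l'.
Proof.
intros Hf [B HB]; destruct (Req_dec l l') as [E|E]; [exact E|exfalso].
assert (Heps : 0 < Rabs (l' - l)) by (apply Rabs_pos_lt; lra).
destruct (Hf _ Heps) as [A HA].
set (c := Rabs A + Rabs B + 1).
pose proof (Rabs_pos A); pose proof (Rabs_pos B).
pose proof (Rle_abs A); pose proof (Rle_abs B).
pose proof (Rabs_maj2 A); pose proof (Rabs_maj2 B).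
assert (Hint : is_RInt f (- c) c l') by (apply HB; unfold c; lra).
destruct (HA (- c) c) as [pr Hpr]; [unfold c; lra|unfold c; lra|].
rewrite <- RInt_Reals, (is_RInt_unique (V:=R_CompleteNormedModule) _ _ _ _ Hint) in Hpr.
lra.
Qed.

Definition std_edge (n : nat) (c mu theta : R) : R := sqrt (INR n) * (c * mu - theta).

Section Asymptotics.

Variable Phi : R -> R.
Hypothesis HPhi : is_std_normal_cdf Phi.

Lemma is_RInt_alasso_zero n mu theta a b :
  0 < mu -> a < - mu -> mu < b ->
  is_RInt (fun y => ybar_density n theta y * indic _ (Req_EM_T (alasso mu y) 0)) a b
    (Phi (sqrt (INR n) * (mu - theta)) - Phi (sqrt (INR n) * (- mu - theta))).
Proof.
intros Hmu Ha Hb.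
set (f := fun y => ybar_density n theta y * indic _ (Req_EM_T (alasso mu y) 0)).
set (s := sqrt (INR n)).
assert (Hzero : forall c d, c <= d -> (forall y, c < y < d -> mu < Rabs y) ->
                  is_RInt f c d 0).
{ intros c d Hcd Hout.
  apply (is_RInt_ext (fun _ => 0)).
  - rewrite Rmin_left, Rmax_right by lra; intros y Hy; unfold f.
    destruct (Req_EM_T (alasso mu y) 0) as [E|E]; simpl; [|ring].
    exfalso; apply (alasso_neq0 mu y); [lra|apply Hout, Hy|exact E].
  - rewrite <- (Rmult_0_r (d - c)) at 1; exact (is_RInt_const (V:=R_NormedModule) c d 0). }
replace (Phi (s * (mu - theta)) - Phi (s * (- mu - theta)))
  with (plus (plus 0 (Phi (s * (mu - theta)) - Phi (s * (- mu - theta)))) 0)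
  by (unfold plus; simpl; ring).
apply (is_RInt_Chasles (V:=R_NormedModule)) with mu;
  [apply (is_RInt_Chasles (V:=R_NormedModule)) with (- mu)|].
- apply Hzero; [lra|]; intros y Hy; rewrite Rabs_left; lra.
- apply (is_RInt_ext (fun y => scal s (phi (s * y + - s * theta)))).
  + rewrite Rmin_left, Rmax_right by lra; intros y Hy; unfold f.
    destruct (Req_EM_T (alasso mu y) 0) as [E|E]; simpl.
    * unfold ybar_density, scal; simpl; unfold mult; simpl; fold s.
      replace (s * (y - theta)) with (s * y + - s * theta) by ring; ring.
    * exfalso; apply E, alasso_eq0, Rabs_def1; lra.
  + apply (is_RInt_comp_lin (V:=R_NormedModule) phi s (- s * theta) (- mu) mu).
    replace (s * (mu - theta)) with (s * mu + - s * theta) by ring.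
    replace (s * (- mu - theta)) with (s * - mu + - s * theta) by ring.
    rewrite Phi_sub by exact HPhi.
    apply (RInt_correct (V:=R_CompleteNormedModule)), ex_RInt_phi.
- apply Hzero; [lra|]; intros y Hy; rewrite Rabs_right; lra.
Qed.

Lemma prob_alasso_zero_eq n mu theta p :
  0 < mu -> prob_alasso_zero n mu theta p ->
  p = Phi (std_edge n 1 mu theta) - Phi (std_edge n (-1) mu theta).
Proof.
intros Hmu Hp; apply (improper_int_R_unique _ _ _ Hp).
exists mu; intros a b Ha Hb; unfold std_edge.
replace (1 * mu) with mu by ring; replace (-1 * mu) with (- mu) by ring.
apply is_RInt_alasso_zero; lra.
Qed.

Variables mu theta p : nat -> R.
Hypothesis Hmu_pos : forall n, 0 < mu n.
Hypothesis Hp : forall n, (1 <= n)%nat -> prob_alasso_zero n (mu n) (theta n) (p n).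

Lemma is_lim_seq_prob la lb :
  is_lim_seq (fun n => std_edge n 1 (mu n) (theta n)) la ->
  is_lim_seq (fun n => std_edge n (-1) (mu n) (theta n)) lb ->
  Un_cv p (Phi_bar Phi la - Phi_bar Phi lb).
Proof.
intros Ha Hb; apply is_lim_seq_Reals.
apply is_lim_seq_ext_loc
  with (fun n => Phi (std_edge n 1 (mu n) (theta n)) - Phi (std_edge n (-1) (mu n) (theta n))).
- exists 1%nat; intros n Hn; symmetry; apply prob_alasso_zero_eq; auto.
- apply is_lim_seq_minus'; apply is_lim_seq_Phi; assumption.
Qed.

Lemma prob_lim_local m nu :
  Un_cv (fun n => sqrt (INR n) * mu n) m ->
  cv_ER (fun n => sqrt (INR n) * theta n) nu ->
  Un_cv p (PhiE Phi (ER_neg_plus nu m) - PhiE Phi (ER_neg_plus nu (- m))).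
Proof.
intros Hm Hnu; apply is_lim_seq_Reals in Hm; apply cv_ER_is_lim_seq in Hnu.
assert (Hedge : forall c, is_lim_seq (fun n => std_edge n c (mu n) (theta n))
                            (Rbar_plus (Rbar_opp (Rbar_of_ER nu)) (c * m))).
{ intros c.
  apply (is_lim_seq_ext (fun n => - (sqrt (INR n) * theta n) + c * (sqrt (INR n) * mu n)));
    [intros; unfold std_edge; ring|].
  apply is_lim_seq_plus with (Rbar_opp (Rbar_of_ER nu)) (c * m).
  - now apply (proj1 (is_lim_seq_opp _ _)).
  - exact (is_lim_seq_scal_l _ c m Hm).
  - now destruct nu. }
rewrite !PhiE_Phi_bar, !Rbar_of_ER_neg_plus.
apply is_lim_seq_prob.
- rewrite <- (Rmult_1_l m); apply Hedge.
- replace (- m) with (-1 * m) by ring; apply Hedge.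
Qed.

Hypothesis Hrate : is_lim_seq (fun n => sqrt (INR n) * mu n) p_infty.

Lemma is_lim_seq_std_edge (zeta : Rbar) (c : R) (l : Rbar) :
  is_lim_seq (fun n => theta n / mu n) zeta ->
  is_Rbar_mult p_infty (Rbar_minus c zeta) l ->
  is_lim_seq (fun n => std_edge n c (mu n) (theta n)) l.
Proof.
intros Hzeta Hl.
apply (is_lim_seq_ext (fun n => sqrt (INR n) * mu n * (c - theta n / mu n))).
{ intros n; unfold std_edge; pose proof (Hmu_pos n); field; lra. }
apply is_lim_seq_mult with p_infty (Rbar_minus c zeta); [exact Hrate| |exact Hl].
apply is_lim_seq_minus with c zeta; [apply is_lim_seq_const|exact Hzeta|].
now destruct zeta.
Qed.

Lemma is_lim_seq_std_edge_p_infty (zeta : Rbar) (c : R) :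
  is_lim_seq (fun n => theta n / mu n) zeta -> Rbar_lt zeta c ->
  is_lim_seq (fun n => std_edge n c (mu n) (theta n)) p_infty.
Proof.
intros Hzeta Hc; apply (is_lim_seq_std_edge zeta); [exact Hzeta|].
apply is_Rbar_mult_p_infty_pos; destruct zeta; simpl in *; [lra|easy|easy].
Qed.

Lemma is_lim_seq_std_edge_m_infty (zeta : Rbar) (c : R) :
  is_lim_seq (fun n => theta n / mu n) zeta -> Rbar_lt c zeta ->
  is_lim_seq (fun n => std_edge n c (mu n) (theta n)) m_infty.
Proof.
intros Hzeta Hc; apply (is_lim_seq_std_edge zeta); [exact Hzeta|].
apply is_Rbar_mult_p_infty_neg; destruct zeta; simpl in *; [lra|easy|easy].
Qed.

Lemma prob_lim_inner zeta :
  cv_ER (fun n => theta n / mu n) zeta -> ER_abs_lt1 zeta -> Un_cv p 1.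
Proof.
intros Hzeta Hlt; apply cv_ER_is_lim_seq in Hzeta.
destruct zeta as [z| |]; simpl in Hlt; try contradiction.
destruct (Rabs_def2 _ _ Hlt).
replace 1 with (Phi_bar Phi p_infty - Phi_bar Phi m_infty) by (simpl; ring).
apply is_lim_seq_prob.
- eapply is_lim_seq_std_edge_p_infty; [exact Hzeta|simpl; lra].
- eapply is_lim_seq_std_edge_m_infty; [exact Hzeta|simpl; lra].
Qed.

Lemma prob_lim_outer zeta :
  cv_ER (fun n => theta n / mu n) zeta -> ER_abs_gt1 zeta -> Un_cv p 0.
Proof.
intros Hzeta Hgt; apply cv_ER_is_lim_seq in Hzeta.
assert (Hcases : Rbar_lt (Rbar_of_ER zeta) (-1) \/ Rbar_lt 1 (Rbar_of_ER zeta)).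
{ destruct zeta as [z| |]; simpl in *; auto.
  destruct (Rcase_abs z); [rewrite Rabs_left in Hgt|rewrite Rabs_right in Hgt]; lra. }
destruct Hcases as [Hlow|Hhigh].
- replace 0 with (Phi_bar Phi p_infty - Phi_bar Phi p_infty) by (simpl; ring).
  apply is_lim_seq_prob; eapply is_lim_seq_std_edge_p_infty; try exact Hzeta.
  + apply Rbar_lt_trans with (-1); [exact Hlow|simpl; lra].
  + exact Hlow.
- replace 0 with (Phi_bar Phi m_infty - Phi_bar Phi m_infty) by (simpl; ring).
  apply is_lim_seq_prob; eapply is_lim_seq_std_edge_m_infty; try exact Hzeta.
  + exact Hhigh.
  + apply Rbar_lt_trans with 1; [simpl; lra|exact Hhigh].
Qed.

Lemma prob_lim_boundary z r :
  cv_ER (fun n => theta n / mu n) (Fin z) -> Rabs z = 1 ->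
  cv_ER (fun n => sqrt (INR n) * (mu n - z * theta n)) r ->
  Un_cv p (PhiE Phi r).
Proof.
intros Hzeta Hz Hr; apply cv_ER_is_lim_seq in Hzeta, Hr; rewrite PhiE_Phi_bar.
destruct (Rcase_abs z) as [Hneg|Hpos].
- rewrite Rabs_left in Hz by lra; replace z with (-1) in * by lra.
  replace (Phi_bar Phi (Rbar_of_ER r))
    with (Phi_bar Phi p_infty - Phi_bar Phi (Rbar_opp (Rbar_of_ER r))).
  + apply is_lim_seq_prob.
    * eapply is_lim_seq_std_edge_p_infty; [exact Hzeta|simpl; lra].
    * apply (is_lim_seq_ext (fun n => - (sqrt (INR n) * (mu n - -1 * theta n))));
        [intros; unfold std_edge; ring|].
      now apply (proj1 (is_lim_seq_opp _ _)).
  + destruct (Rbar_of_ER r) as [x| |]; simpl; [|ring|ring].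
    pose proof (Phi_add_opp Phi HPhi x); lra.
- rewrite Rabs_right in Hz by lra; replace z with 1 in * by lra.
  replace (Phi_bar Phi (Rbar_of_ER r))
    with (Phi_bar Phi (Rbar_of_ER r) - Phi_bar Phi m_infty) by (simpl; ring).
  apply is_lim_seq_prob.
  + apply (is_lim_seq_ext (fun n => sqrt (INR n) * (mu n - 1 * theta n)));
      [intros; unfold std_edge; ring|exact Hr].
  + eapply is_lim_seq_std_edge_m_infty; [exact Hzeta|simpl; lra].
Qed.

End Asymptotics.

Theorem proposition1
  (Phi : R -> R) (HPhi : is_std_normal_cdf Phi)
  (mu theta p : nat -> R)
  (Hmu_pos : forall n, 0 < mu n)
  (Hmu0 : Un_cv mu 0)
  (Hp : forall n, (1 <= n)%nat -> prob_alasso_zero n (mu n) (theta n) (p n)) :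
  (* (i) *)
  (forall (m : R) (nu : ER),
     Un_cv (fun n => sqrt (INR n) * mu n) m ->
     cv_ER (fun n => sqrt (INR n) * theta n) nu ->
     Un_cv p (PhiE Phi (ER_neg_plus nu m) - PhiE Phi (ER_neg_plus nu (- m))))
  /\
  (* (ii) *)
  (cv_infty (fun n => sqrt (INR n) * mu n) ->
   forall zeta : ER,
     cv_ER (fun n => theta n / mu n) zeta ->
     (ER_abs_lt1 zeta -> Un_cv p 1)
     /\ (forall (z : R) (r : ER), zeta = Fin z -> Rabs z = 1 ->
           cv_ER (fun n => sqrt (INR n) * (mu n - z * theta n)) r ->
           Un_cv p (PhiE Phi r))
     /\ (ER_abs_gt1 zeta -> Un_cv p 0)).
Proof.
split.
- exact (prob_lim_local Phi HPhi mu theta p Hmu_pos Hp).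
- intros Hrate zeta Hzeta; apply is_lim_seq_p_infty_Reals in Hrate.
  split; [|split].
  + exact (prob_lim_inner Phi HPhi mu theta p Hmu_pos Hp Hrate zeta Hzeta).
  + intros z r -> Hz Hr.
    exact (prob_lim_boundary Phi HPhi mu theta p Hmu_pos Hp Hrate z r Hzeta Hz Hr).
  + exact (prob_lim_outer Phi HPhi mu theta p Hmu_pos Hp Hrate zeta Hzeta).
Qed.
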